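(* Let $A$ be a finite set of options containing a default option $0$, let $v$ be a Llull matrix on $A$ with path scores $v^*$, and let $D(z)$ be as in the context. Let $x,y\in A$ be distinct. If $D(x)\ge0$ and $D(x)>D(y)$, then $D(x)\ge v^*_{yx}-v^*_{xy}$. If moreover $D(x)>0$, then $D(x)>v^*_{yx}-v^*_{xy}$.
   Context: A Llull matrix on $A$ is a family of real numbers $v_{xy}\in[0,1]$, indexed by ordered pairs $(x,y)$ of distinct elements of $A$, with $v_{xy}+v_{yx}\le1$. Path scores: $v^*_{xy}=\max\min(v_{x_0x_1},\dots,v_{x_{m-1}x_m})$ over all paths $x_0\dots x_m$ ($m\ge1$, $x_0=x$, $x_m=y$, $x_i$ pairwise distinct). For $z\in A$, $D(z)=v^*_{z0}-v^*_{0z}$ if $z\ne0$ and $D(0)=0$. *)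

From HB Require Import structures.
From mathcomp Require Import all_boot all_order all_algebra.
Set Implicit Arguments. Unset Strict Implicit. Unset Printing Implicit Defensive.
Import Order.TTheory GRing.Theory Num.Theory.
Local Open Scope ring_scope.

Section Llull.
Variables (R : realFieldType) (A : finType).

(* A Llull matrix: v x y in [0,1] and v x y + v y x <= 1 for distinct x, y.
   Entries v x x are irrelevant (never used). *)
Definition llull (v : A -> A -> R) : Prop :=
  forall x y : A, x != y ->
    [/\ 0 <= v x y, v x y <= 1 & v x y + v y x <= 1].

(* For nonempty p
   this is min(v x x1, v x1 x2, ..., v x_{m-1} x_m); the value 1 for the
   empty tail is only the neutral element (all entries are <= 1). *)
Fixpoint pathmin (v : A -> A -> R) (x : A) (p : seq A) : R :=
  match p with
  | [::] => 1
  | y :: q => Num.min (v x y) (pathmin v y q)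
  end.

(* Path score v*_{xy}: maximum of pathmin over all paths x = x0, x1, ..., xm = y
   with m >= 1 and pairwise distinct x_i.  Such a path is x :: t with
   t an (n+1)-tuple, uniq (x :: t), last x t = y; necessarily n < #|A|.
   The neutral element 0 of the max is harmless since all scores are >= 0
   (and the direct path exists when x != y). *)
Definition vstar (v : A -> A -> R) (x y : A) : R :=
  \big[Num.max/0]_(n < #|A|)
    \big[Num.max/0]_(t : n.+1.-tuple A | uniq (x :: t) && (last x t == y))
      pathmin v x t.

Definition Dscore (v : A -> A -> R) (a0 z : A) : R :=
  if z == a0 then 0 else vstar v z a0 - vstar v a0 z.

End Llull.

From HB Require Import structures.
From mathcomp Require Import all_boot all_order all_algebra.
From mathcomp Require Import lra.
Import Order.TTheory GRing.Theory Num.Theory.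
Local Open Scope ring_scope.

(* Path scores satisfy the min-triangle inequality
   [min (v*_ab) (v*_bc) <= v*_ac]: concatenating optimal paths and cutting out
   cycles gives a simple path whose weakest link is no weaker.  Instantiated on
   the six ordered triples of distinct points among x, y and 0, this yields six
   inequalities between the six scores involved, from which the claim follows by
   deciding which argument realizes each minimum. *)

Section PathScore.
Variables (R : realFieldType) (A : finType) (v : A -> A -> R).

Definition simple_path (a c : A) (t : seq A) : bool :=
  [&& t != [::], uniq (a :: t) & last a t == c].

Lemma pathmin_le1 a t : pathmin v a t <= 1.
Proof.
elim: t a => [|y q IH] a //=.
by rewrite ge_min IH orbT.
Qed.

Lemma le_pathmin (w : R) a t : w <= 1 ->
  (w <= pathmin v a t) = path (fun u z => w <= v u z) a t.
Proof.
move=> w_le1; elim: t a => [|y q IH] a /=; first by rewrite w_le1.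
by rewrite le_min IH.
Qed.

Lemma vstar_eq0_or_attained a c :
  vstar v a c = 0 \/ exists2 t, simple_path a c t & pathmin v a t = vstar v a c.
Proof.
pose P z := z = 0 \/ exists2 t, simple_path a c t & pathmin v a t = z.
have P0 : P 0 by left.
have Pmax z1 z2 : P z1 -> P z2 -> P (Num.max z1 z2).
  by rewrite /Num.max; case: ifP.
apply: (big_ind P) => // n _; apply: (big_ind P) => // t /andP[t_uniq t_last].
right; exists (val t) => //.
by rewrite /simple_path t_uniq t_last andbT; case: t {t_uniq t_last} => [[]].
Qed.

Lemma pathmin_le_vstar a c t : simple_path a c t -> pathmin v a t <= vstar v a c.
Proof.
case/and3P=> t_nil t_uniq t_last.
have size_lt : (size t < #|A|)%N.
  by have := max_card (mem (a :: t)); rewrite (card_uniqP t_uniq).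
have size_eq : size t == (size t).-1.+1 by case: t t_nil {t_uniq t_last size_lt}.
have n_lt : ((size t).-1 < #|A|)%N by rewrite -ltnS -(eqP size_eq) ltnW.
rewrite /vstar (bigD1 (Ordinal n_lt)) //= le_max; apply/orP; left.
rewrite (bigD1 (Tuple size_eq)) /=; last by rewrite t_last andbT.
by rewrite le_max lexx.
Qed.

Hypothesis hv : llull v.

Lemma vstar_ge0 a c : a != c -> 0 <= vstar v a c.
Proof.
move=> ac; apply: le_trans (@pathmin_le_vstar a c [:: c] _).
  by rewrite /= le_min ler01 andbT; case: (hv _ _ ac).
by rewrite /simple_path /= eqxx mem_seq1 ac.
Qed.

Lemma vstar_min_trans a b c : a != c ->
  Num.min (vstar v a b) (vstar v b c) <= vstar v a c.
Proof.
move=> ac.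
case: (vstar_eq0_or_attained a b) => [->|[t1 path1 <-]].
  by rewrite ge_min vstar_ge0.
case: (vstar_eq0_or_attained b c) => [->|[t2 path2 <-]].
  by rewrite ge_min vstar_ge0 ?orbT.
set w := Num.min _ _.
have w_le1 : w <= 1 by rewrite ge_min pathmin_le1.
case/and3P: path1 => _ _ /eqP last1; case/and3P: path2 => _ _ /eqP last2.
have w_path : path (fun u z => w <= v u z) a (t1 ++ t2).
  by rewrite cat_path -!le_pathmin // last1 /w !ge_min !lexx ?orbT.
have : last a (t1 ++ t2) = c by rewrite last_cat last1 last2.
case: (shortenP w_path) => t w_t t_uniq _ t_last {last1 last2}.
apply: le_trans (@pathmin_le_vstar a c t _); first by rewrite le_pathmin.
rewrite /simple_path t_uniq t_last eqxx andbT.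
by case: t {w_t t_uniq} t_last ac => //= <-; rewrite eqxx.
Qed.

End PathScore.

(* [p, q] are v*_x0, v*_0x; [r, s] are v*_y0, v*_0y; [e, f] are v*_xy, v*_yx. *)
Lemma score_triangle_bound (R : realFieldType) (p q r s e f : R) :
  Num.min e r <= p -> Num.min q e <= s -> Num.min f p <= r ->
  Num.min s f <= q -> Num.min p s <= e -> Num.min r q <= f ->
  0 <= p - q -> r - s < p - q ->
  f - e <= p - q /\ (0 < p - q -> f - e < p - q).
Proof. by rewrite !ge_min; do 6 case/orP=> ?; move=> *; split=> *; lra. Qed.

Theorem theorem3p5 (R : realFieldType) (A : finType) (a0 : A)
  (v : A -> A -> R) (hv : llull v) (x y : A) (hxy : x != y) :
  0 <= Dscore v a0 x -> Dscore v a0 y < Dscore v a0 x ->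
  vstar v y x - vstar v x y <= Dscore v a0 x /\
  (0 < Dscore v a0 x -> vstar v y x - vstar v x y < Dscore v a0 x).
Proof.
rewrite /Dscore.
have [ex|x0] := eqVneq x a0.
  by subst x; rewrite eq_sym (negbTE hxy) => _ /ltW; split; last rewrite ltxx.
have [ey|y0] := eqVneq y a0.
  by subst y => Dx_ge0 _; split=> *; lra.
by apply: score_triangle_bound; apply: vstar_min_trans; rewrite // eq_sym.
Qed.
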